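(* Let $\pi^0,\pi^1,\gamma>0$, $\mathrm{E}^{\mathrm{bau}}=\bm{q^{\mathrm{bau}}}=\pi^0/\pi^1$, $\mathcal{W}^{\mathrm{bau}}_{\mathrm{C}}=(\pi^0)^2/(2\pi^1)$, $\varrho=1/\pi^1+1/\gamma$, and let $\tau,\lambda>0$ satisfy $\tau\varrho<\mathrm{E}^{\mathrm{bau}}$ and $\lambda\varrho<\mathrm{E}^{\mathrm{bau}}$. Let $0<P<\lambda$. (Tax) The wealth $\pi(q)-c(q,a)-\tau e^{-a}q$ is maximized at $\bm{q^{\mathrm{tax}}}=\bm{q^{\mathrm{bau}}}-\tau/\pi^1$ and $e^{-\bm{a^{\mathrm{tax}}}}=(\mathrm{E}^{\mathrm{bau}}-\tau\varrho)/\bm{q^{\mathrm{tax}}}$, with resulting emissions $\mathrm{E}^{\mathrm{tax}}=e^{-\bm{a^{\mathrm{tax}}}}\bm{q^{\mathrm{tax}}}=\mathrm{E}^{\mathrm{bau}}-\tau\varrho$ and wealth $\mathcal{W}^{\mathrm{tax}}_{\mathrm{C}}=\mathcal{W}^{\mathrm{bau}}_{\mathrm{C}}-\tau(\mathrm{E}^{\mathrm{bau}}-\tfrac\tau2\varrho)$. (Market) The wealth $\pi(q)-c(q,a)-\delta P-\lambda(qe^{-a}-\delta)^+$ is maximized at $\bm{q^{\mathrm{mar}}}=\bm{q^{\mathrm{bau}}}-P/\pi^1$, $e^{-\bm{a^{\mathrm{mar}}}}=(\mathrm{E}^{\mathrm{bau}}-P\varrho)/\bm{q^{\mathrm{mar}}}$,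 $\bm\delta=\mathrm{E}^{\mathrm{bau}}-P\varrho$, with resulting emissions $\mathrm{E}^{\mathrm{mar}}=\mathrm{E}^{\mathrm{bau}}-P\varrho=\bm\delta$ and wealth $\mathcal{W}^{\mathrm{mar}}_{\mathrm{C}}=\mathcal{W}^{\mathrm{bau}}_{\mathrm{C}}-P(\mathrm{E}^{\mathrm{bau}}-\tfrac P2\varrho)$.
   Context: A company producing $q$ units has raw wealth $\pi(q)=\pi^0q-\tfrac{\pi^1}{2}q^2$; its carbon emissions equal $q$, reduced to $e^{-a}q$ by a green technology effort $a$ at cost $c(q,a)=\tfrac\gamma2[(1-e^{-a})q]^2$. Under the tax scheme a tax $\tau$ is paid per unit of emission; under the market scheme the company buys $\delta$ certificates at unit price $P$ and pays a penalty $\lambda$ per unit of emission exceeding $\delta$. The company maximizes its wealth over its decision variables ($q,a$ under tax; $q,a,\delta$ under market), subject to production and wealth being positive. $\mathrm{E}^{\mathrm{bau}},\bm{q^{\mathrm{bau}}},\mathcal{W}^{\mathrm{bau}}_{\mathrm{C}}$ are the business-as-usual (unconstrained) emissions, production and wealth. *)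

From Stdlib Require Import Reals.
Open Scope R_scope.

Definition raw_wealth (pi0 pi1 q : R) : R := pi0 * q - pi1 / 2 * q ^ 2.

Definition green_cost (gamma q a : R) : R := gamma / 2 * ((1 - exp (- a)) * q) ^ 2.

Definition emissions (q a : R) : R := exp (- a) * q.

Definition pos_part (x : R) : R := Rmax x 0.

Definition E_bau (pi0 pi1 : R) : R := pi0 / pi1.
Definition q_bau (pi0 pi1 : R) : R := pi0 / pi1.
Definition W_bau (pi0 pi1 : R) : R := pi0 ^ 2 / (2 * pi1).
Definition varrho (pi1 gamma : R) : R := 1 / pi1 + 1 / gamma.

Definition wealth_tax (pi0 pi1 gamma tau q a : R) : R :=
  raw_wealth pi0 pi1 q - green_cost gamma q a - tau * emissions q a.

Definition wealth_mar (pi0 pi1 gamma P lambda q a delta : R) : R :=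
  raw_wealth pi0 pi1 q - green_cost gamma q a - delta * P
  - lambda * pos_part (emissions q a - delta).

Definition admissible_tax (pi0 pi1 gamma tau q a : R) : Prop :=
  0 < q /\ 0 < wealth_tax pi0 pi1 gamma tau q a.
Definition admissible_mar (pi0 pi1 gamma P lambda q a delta : R) : Prop :=
  0 < q /\ 0 < wealth_mar pi0 pi1 gamma P lambda q a delta.

From Stdlib Require Import Reals Lra Psatz.
Open Scope R_scope.

(* Writing e for the emissions, the tax-scheme wealth is a concave quadratic in
   (q, q - e) once the cost is expressed through the abatement q - e; completing
   the square exhibits the maximiser q = q_bau - tau/pi1, q - e = tau/gamma and the
   maximal wealth.  Under the market scheme, since P <= lambda, buying delta
   certificates and paying the penalty on the excess always costs at least P e, so
   the market wealth is bounded by the tax wealth with tau = P, with equality when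
   delta = e. *)

Lemma varrho_gt0 (pi1 gamma : R) : 0 < pi1 -> 0 < gamma -> 0 < varrho pi1 gamma.
Proof.
  intros Hpi1 Hgamma; unfold varrho.
  assert (0 < 1 / pi1) by (apply Rdiv_lt_0_compat; lra).
  assert (0 < 1 / gamma) by (apply Rdiv_lt_0_compat; lra).
  lra.
Qed.

Lemma exists_exp_opp_eq (x : R) : 0 < x -> exists a : R, exp (- a) = x.
Proof. intros Hx; exists (- ln x); rewrite Ropp_involutive; exact (exp_ln x Hx). Qed.

Lemma wealth_tax_emissions (pi0 pi1 gamma tau q a : R) :
  wealth_tax pi0 pi1 gamma tau q a =
  raw_wealth pi0 pi1 q - gamma / 2 * (q - emissions q a) ^ 2 - tau * emissions q a.
Proof. unfold wealth_tax, green_cost, emissions; ring. Qed.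

Section TaxScheme.

Variables pi0 pi1 gamma tau : R.
Hypotheses (pi1_gt0 : 0 < pi1) (gamma_gt0 : 0 < gamma).

Lemma abatement_tax_optimum :
  (q_bau pi0 pi1 - tau / pi1) - (E_bau pi0 pi1 - tau * varrho pi1 gamma) = tau / gamma.
Proof. unfold q_bau, E_bau, varrho; field; lra. Qed.

Lemma wealth_tax_optimum_eq :
  W_bau pi0 pi1 - tau * (E_bau pi0 pi1 - tau / 2 * varrho pi1 gamma)
  = pi1 / 2 * (q_bau pi0 pi1 - tau / pi1) ^ 2 + tau ^ 2 / (2 * gamma).
Proof. unfold W_bau, E_bau, q_bau, varrho; field; lra. Qed.

Lemma raw_wealth_complete_square (q e : R) :
  raw_wealth pi0 pi1 q - gamma / 2 * (q - e) ^ 2 - tau * e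
  = W_bau pi0 pi1 - tau * (E_bau pi0 pi1 - tau / 2 * varrho pi1 gamma)
    - (pi1 / 2 * (q - (q_bau pi0 pi1 - tau / pi1)) ^ 2
       + gamma / 2 * (q - e - tau / gamma) ^ 2).
Proof. unfold raw_wealth, W_bau, E_bau, q_bau, varrho; field; lra. Qed.

Lemma wealth_tax_le_optimum (q a : R) :
  wealth_tax pi0 pi1 gamma tau q a
  <= W_bau pi0 pi1 - tau * (E_bau pi0 pi1 - tau / 2 * varrho pi1 gamma).
Proof.
  rewrite wealth_tax_emissions, raw_wealth_complete_square.
  assert (0 <= pi1 / 2 * (q - (q_bau pi0 pi1 - tau / pi1)) ^ 2)
    by (apply Rmult_le_pos; [lra | apply pow2_ge_0]).
  assert (0 <= gamma / 2 * (q - emissions q a - tau / gamma) ^ 2)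
    by (apply Rmult_le_pos; [lra | apply pow2_ge_0]).
  lra.
Qed.

Lemma wealth_tax_at_optimum (a : R) :
  emissions (q_bau pi0 pi1 - tau / pi1) a = E_bau pi0 pi1 - tau * varrho pi1 gamma ->
  wealth_tax pi0 pi1 gamma tau (q_bau pi0 pi1 - tau / pi1) a
  = W_bau pi0 pi1 - tau * (E_bau pi0 pi1 - tau / 2 * varrho pi1 gamma).
Proof.
  intros Hem.
  rewrite wealth_tax_emissions, raw_wealth_complete_square, Hem.
  replace (q_bau pi0 pi1 - tau / pi1 - (E_bau pi0 pi1 - tau * varrho pi1 gamma)
           - tau / gamma) with 0 by (rewrite abatement_tax_optimum; ring).
  ring.
Qed.

Lemma tax_scheme_optimum :
  0 < tau -> tau * varrho pi1 gamma < E_bau pi0 pi1 ->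
  (let q_tax := q_bau pi0 pi1 - tau / pi1 in
   (exists a_tax : R, exp (- a_tax) = (E_bau pi0 pi1 - tau * varrho pi1 gamma) / q_tax) /\
   forall a_tax : R,
     exp (- a_tax) = (E_bau pi0 pi1 - tau * varrho pi1 gamma) / q_tax ->
     admissible_tax pi0 pi1 gamma tau q_tax a_tax /\
     (forall q a : R, admissible_tax pi0 pi1 gamma tau q a ->
        wealth_tax pi0 pi1 gamma tau q a <= wealth_tax pi0 pi1 gamma tau q_tax a_tax) /\
     emissions q_tax a_tax = E_bau pi0 pi1 - tau * varrho pi1 gamma /\
     wealth_tax pi0 pi1 gamma tau q_tax a_tax
       = W_bau pi0 pi1 - tau * (E_bau pi0 pi1 - tau / 2 * varrho pi1 gamma)).
Proof.
  intros Htau Hcap q_tax.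
  assert (Htau_gamma : 0 < tau / gamma) by (apply Rdiv_lt_0_compat; lra).
  assert (Hq : 0 < q_tax) by (pose proof abatement_tax_optimum; unfold q_tax; lra).
  assert (He : 0 < (E_bau pi0 pi1 - tau * varrho pi1 gamma) / q_tax)
    by (apply Rdiv_lt_0_compat; lra).
  split; [exact (exists_exp_opp_eq _ He) | intros a Ha].
  assert (Hem : emissions q_tax a = E_bau pi0 pi1 - tau * varrho pi1 gamma)
    by (unfold emissions; rewrite Ha; field; lra).
  assert (Hw : wealth_tax pi0 pi1 gamma tau q_tax a
               = W_bau pi0 pi1 - tau * (E_bau pi0 pi1 - tau / 2 * varrho pi1 gamma))
    by exact (wealth_tax_at_optimum a Hem).
  assert (Hw_pos : 0 < W_bau pi0 pi1 - tau * (E_bau pi0 pi1 - tau / 2 * varrho pi1 gamma)).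
  { rewrite wealth_tax_optimum_eq.
    assert (0 < pi1 / 2 * (q_bau pi0 pi1 - tau / pi1) ^ 2)
      by (apply Rmult_lt_0_compat; [lra | apply pow_lt; exact Hq]).
    assert (0 < tau ^ 2 / (2 * gamma)) by (apply Rdiv_lt_0_compat; nra).
    lra. }
  repeat split; try assumption.
  - rewrite Hw; exact Hw_pos.
  - intros q a' _; rewrite Hw; apply wealth_tax_le_optimum.
Qed.

End TaxScheme.

Lemma wealth_mar_le_wealth_tax (pi0 pi1 gamma P lambda q a delta : R) :
  0 <= P -> P <= lambda ->
  wealth_mar pi0 pi1 gamma P lambda q a delta <= wealth_tax pi0 pi1 gamma P q a.
Proof.
  intros HP HPl; unfold wealth_mar, wealth_tax, pos_part.
  destruct (Rle_dec (emissions q a - delta) 0).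
  - rewrite Rmax_right by lra; nra.
  - rewrite Rmax_left by lra; nra.
Qed.

Lemma wealth_mar_cover_emissions (pi0 pi1 gamma P lambda q a : R) :
  wealth_mar pi0 pi1 gamma P lambda q a (emissions q a) = wealth_tax pi0 pi1 gamma P q a.
Proof.
  unfold wealth_mar, wealth_tax, pos_part.
  rewrite Rminus_diag, Rmax_left by lra; ring.
Qed.
Theorem proposition2p3 (pi0 pi1 gamma tau lambda P : R) :
  0 < pi0 -> 0 < pi1 -> 0 < gamma -> 0 < tau -> 0 < lambda ->
  tau * varrho pi1 gamma < E_bau pi0 pi1 ->
  lambda * varrho pi1 gamma < E_bau pi0 pi1 ->
  0 < P -> P < lambda ->
  (* Tax scheme *)
  (let q_tax := q_bau pi0 pi1 - tau / pi1 in
   (exists a_tax : R, exp (- a_tax) = (E_bau pi0 pi1 - tau * varrho pi1 gamma) / q_tax) /\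
   forall a_tax : R,
     exp (- a_tax) = (E_bau pi0 pi1 - tau * varrho pi1 gamma) / q_tax ->
     admissible_tax pi0 pi1 gamma tau q_tax a_tax /\
     (forall q a : R, admissible_tax pi0 pi1 gamma tau q a ->
        wealth_tax pi0 pi1 gamma tau q a <= wealth_tax pi0 pi1 gamma tau q_tax a_tax) /\
     emissions q_tax a_tax = E_bau pi0 pi1 - tau * varrho pi1 gamma /\
     wealth_tax pi0 pi1 gamma tau q_tax a_tax
       = W_bau pi0 pi1 - tau * (E_bau pi0 pi1 - tau / 2 * varrho pi1 gamma)) /\
  (* Market scheme *)
  (let q_mar := q_bau pi0 pi1 - P / pi1 in
   let delta_mar := E_bau pi0 pi1 - P * varrho pi1 gamma in
   (exists a_mar : R, exp (- a_mar) = (E_bau pi0 pi1 - P * varrho pi1 gamma) / q_mar) /\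
   forall a_mar : R,
     exp (- a_mar) = (E_bau pi0 pi1 - P * varrho pi1 gamma) / q_mar ->
     admissible_mar pi0 pi1 gamma P lambda q_mar a_mar delta_mar /\
     (forall q a delta : R, admissible_mar pi0 pi1 gamma P lambda q a delta ->
        wealth_mar pi0 pi1 gamma P lambda q a delta
        <= wealth_mar pi0 pi1 gamma P lambda q_mar a_mar delta_mar) /\
     emissions q_mar a_mar = E_bau pi0 pi1 - P * varrho pi1 gamma /\
     emissions q_mar a_mar = delta_mar /\
     wealth_mar pi0 pi1 gamma P lambda q_mar a_mar delta_mar
       = W_bau pi0 pi1 - P * (E_bau pi0 pi1 - P / 2 * varrho pi1 gamma)).
Proof.
  intros Hpi0 Hpi1 Hgamma Htau Hlambda Htau_cap Hlambda_cap HP HPlambda.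
  assert (HP_cap : P * varrho pi1 gamma < E_bau pi0 pi1)
    by (pose proof (varrho_gt0 pi1 gamma Hpi1 Hgamma); nra).
  split; [exact (tax_scheme_optimum pi0 pi1 gamma tau Hpi1 Hgamma Htau Htau_cap) |].
  intros q_mar delta_mar.
  destruct (tax_scheme_optimum pi0 pi1 gamma P Hpi1 Hgamma HP HP_cap) as [Hex Hopt].
  split; [exact Hex | intros a Ha].
  destruct (Hopt a Ha) as [[Hq Hw] [Hmax [Hem Hwealth]]].
  assert (Hcover : wealth_mar pi0 pi1 gamma P lambda q_mar a delta_mar
                   = wealth_tax pi0 pi1 gamma P q_mar a)
    by (unfold delta_mar; rewrite <- Hem; apply wealth_mar_cover_emissions).
  repeat split; rewrite ?Hcover; try assumption.
  intros q a' delta [Hq' Hw'].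
  pose proof (wealth_mar_le_wealth_tax pi0 pi1 gamma P lambda q a' delta) as Hle.
  apply (Rle_trans _ (wealth_tax pi0 pi1 gamma P q a')); [lra |].
  apply Hmax; split; [exact Hq' | lra].
Qed.
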